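(* Let $1\le d\le N$ be integers. A real matrix $\lambda=(\lambda_{i,n})\in\mathbb{R}^{d\times(N+1)}$ (rows $1\le i\le d$, columns $0\le n\le N$) lies in $\Lambda_{N,d}$ if and only if it satisfies all of the following: (C1) $\lambda_{i,n}=0$ whenever $i>n$; (C2) $\lambda_{i,n}=N$ whenever $i<n+d-N+1$; (C3) $\sum_{i=1}^d\lambda_{i,n}=dn$ for $0<n<N$; (C4) $\lambda_{i,n}\le\lambda_{i,n+1}$ for $1\le i\le d$ and $i\le n<N-d+i-1$; (C5) $\lambda_{i,n}\le\lambda_{i-1,n-1}$ for $1<i\le d$ and $i\le n<N-d+i$; (C6) $\lambda_{d,d}\ge 0$; (C7) $\lambda_{1,N-d}\le N$.
   Context: For integers $0\le d\le N$, $\Lambda_{N,d}\subseteq\mathbb{R}^{d\times(N+1)}$ denotes the set of real matrices $\lambda=(\lambda_{i,n})$, with rows indexed by $1\le i\le d$ and columns indexed by $0\le n\le N$, satisfying: $\lambda_{i,0}=0$ for $1\le i\le d$; $\lambda_{i,N}=N$ for $1\le i\le d$; $\sum_{i=1}^d\lambda_{i,n}=dn$ for $0\le n\le N$; $\lambda_{i,n}\le\lambda_{i,n+1}$ for $1\le i\le d$, $0\le n<N$ (horizontal inequalities); $\lambda_{i,n}\le\lambda_{i-1,n-1}$ for $1<i\le d$, $0<n\le N$ (diagonal inequalities). (This is the polytope of eigensteps of equal norm tight frames of $N$ vectors in $d$ dimensions with squared norms $d$.) *)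

From HB Require Import structures.
From mathcomp Require Import all_boot all_order all_algebra.
Set Implicit Arguments. Unset Strict Implicit. Unset Printing Implicit Defensive.
Import Order.TTheory GRing.Theory Num.Theory.
Local Open Scope ring_scope.

(* A real d x (N+1) matrix lambda = (lambda_{i,n}), rows 1 <= i <= d,
   columns 0 <= n <= N, is represented by a function lam : nat -> nat -> R
   with the paper's (1-based row, 0-based column) indexing: lam i n is
   lambda_{i,n}.  Values outside the index range 1<=i<=d, 0<=n<=N are
   irrelevant: every condition below only inspects in-range entries. *)

Definition in_Lambda (R : realFieldType) (N d : nat) (lam : nat -> nat -> R) : Prop :=
  [/\ (forall i, (1 <= i <= d)%N -> lam i 0%N = 0),
      (forall i, (1 <= i <= d)%N -> lam i N = N%:R),
      (forall n, (n <= N)%N -> \sum_(1 <= i < d.+1) lam i n = (d * n)%:R),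
      (forall i n, (1 <= i <= d)%N -> (n < N)%N -> lam i n <= lam i n.+1)
    & (forall i n, (1 < i <= d)%N -> (0 < n <= N)%N -> lam i n <= lam i.-1 n.-1)].

From HB Require Import structures.
From mathcomp Require Import all_boot all_order all_algebra.
From mathcomp Require Import zify.
Set Implicit Arguments. Unset Strict Implicit. Unset Printing Implicit Defensive.
Import Order.TTheory GRing.Theory Num.Theory.
Local Open Scope ring_scope.

(* Every entry of an eigenstep matrix is squeezed between boundary values by
   chains of horizontal or diagonal inequalities: this forces it to be 0 below
   the staircase n < i and to be N on and beyond the staircase n >= N - d + i.
   Conversely, (C1)-(C7) give back every inequality of the definition: within
   the forced regions they are trivial, and the ones crossing a staircase
   follow from 0 <= lam i i and lam i (N - d + i - 1) <= N, which come from
   (C6) and (C7) by chaining (C5) along a diagonal. *)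

Section MonotoneChains.
Context {disp : Order.disp_t} {T : porderType disp} (f : nat -> T) (k : nat).

Let initial_segment_convex :
  {in [pred j | (j <= k)%N] &, forall i j l, (i < l < j)%N -> (l <= k)%N}.
Proof. by move=> i j _ /= jk l /andP[_ /ltnW /leq_trans]; apply. Qed.

Lemma nondec_chain : (forall j, (j < k)%N -> (f j <= f j.+1)%O) -> (f 0 <= f k)%O.
Proof.
move=> f_nondec.
apply: (Order.NatMonotonyTheory.nondecn_inP initial_segment_convex);
  by rewrite ?inE // => j _ /f_nondec.
Qed.

Lemma noninc_chain : (forall j, (j < k)%N -> (f j.+1 <= f j)%O) -> (f k <= f 0)%O.
Proof.
move=> f_noninc.
apply: (Order.NatMonotonyTheory.nonincn_inP initial_segment_convex);
  by rewrite ?inE // => j _ /f_noninc.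
Qed.

End MonotoneChains.

Section EigenstepForcedEntries.
Variables (R : realFieldType) (N d : nat) (lam : nat -> nat -> R).
Hypothesis lam_col0 : forall i, (1 <= i <= d)%N -> lam i 0%N = 0.
Hypothesis lam_colN : forall i, (1 <= i <= d)%N -> lam i N = N%:R.
Hypothesis lam_row_nondec :
  forall i n, (1 <= i <= d)%N -> (n < N)%N -> lam i n <= lam i n.+1.
Hypothesis lam_diag :
  forall i n, (1 < i <= d)%N -> (0 < n <= N)%N -> lam i n <= lam i.-1 n.-1.

Lemma eigenstep_ge0 i n : (1 <= i <= d)%N -> (n <= N)%N -> 0 <= lam i n.
Proof.
move=> i_range nN; have := nondec_chain (f := lam i) (k := n).
rewrite lam_col0 //; apply=> j jn.
by apply: lam_row_nondec; lia.
Qed.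

Lemma eigenstep_leN i n : (1 <= i <= d)%N -> (n <= N)%N -> lam i n <= N%:R.
Proof.
move=> i_range nN.
have := nondec_chain (f := fun k => lam i (n + k)) (k := N - n).
rewrite addn0 subnKC // lam_colN //; apply=> j jN.
by rewrite addnS; apply: lam_row_nondec; lia.
Qed.

Lemma eigenstep_eq0 i n : (1 <= i <= d)%N -> (n <= N)%N -> (n < i)%N -> lam i n = 0.
Proof.
move=> i_range nN ni; apply/le_anti; rewrite eigenstep_ge0 // andbT.
have := noninc_chain (f := fun k => lam (i - n + k) k) (k := n).
rewrite addn0 subnK 1?ltnW // lam_col0; last by lia.
apply=> j jn.
by rewrite addnS; apply: lam_diag; lia.
Qed.

Lemma eigenstep_eqN i n : (1 <= i <= d)%N -> (n <= N)%N -> (i + N < n + d + 1)%N ->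
  lam i n = N%:R.
Proof.
move=> i_range nN saturated; apply/le_anti; rewrite eigenstep_leN //=.
have := noninc_chain (f := fun k => lam (i + k) (n + k)) (k := N - n).
rewrite !addn0 subnKC // lam_colN; last by lia.
apply=> j jN.
by rewrite !addnS; apply: lam_diag; lia.
Qed.

End EigenstepForcedEntries.

Section EigenstepFromConditions.
Variables (R : realFieldType) (N d : nat) (lam : nat -> nat -> R).
Hypothesis d_le_N : (d <= N)%N.
Hypothesis lam_eq0 :
  forall i n, (1 <= i <= d)%N -> (n <= N)%N -> (n < i)%N -> lam i n = 0.
Hypothesis lam_eqN : forall i n, (1 <= i <= d)%N -> (n <= N)%N ->
  (i + N < n + d + 1)%N -> lam i n = N%:R.
Hypothesis lam_sum_interior :
  forall n, (0 < n < N)%N -> \sum_(1 <= i < d.+1) lam i n = (d * n)%:R.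
Hypothesis lam_row_interior : forall i n, (1 <= i <= d)%N -> (i <= n)%N ->
  (n + d + 1 < N + i)%N -> lam i n <= lam i n.+1.
Hypothesis lam_diag_interior : forall i n, (1 < i <= d)%N -> (i <= n)%N ->
  (n + d < N + i)%N -> lam i n <= lam i.-1 n.-1.
Hypothesis lam_dd_ge0 : 0 <= lam d d.
Hypothesis lam_1_leN : lam 1%N (N - d)%N <= N%:R.

Lemma lam_ii_ge0 i : (1 <= i <= d)%N -> 0 <= lam i i.
Proof.
move=> i_range; have [N_le_d|d_lt_N] := leqP N d.
  by rewrite lam_eqN ?ler0n; lia.
have := noninc_chain (f := fun k => lam (i + k) (i + k)) (k := d - i).
rewrite addn0 subnKC; last by lia.
move=> chain; apply: le_trans lam_dd_ge0 (chain _) => j jd.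
by rewrite !addnS; apply: lam_diag_interior; lia.
Qed.

Lemma lam_upper_staircase_leN i n : (1 <= i <= d)%N -> (n + d + 1 = N + i)%N ->
  lam i n <= N%:R.
Proof.
move=> i_range n_stair; have [N_le_d|d_lt_N] := leqP N d.
  by rewrite lam_eq0 ?ler0n //; lia.
have := noninc_chain (f := fun k => lam k.+1 (N - d + k)) (k := i.-1).
have [-> ->] : (i.-1.+1 = i /\ N - d + i.-1 = n)%N by lia.
rewrite addn0 => chain; apply: le_trans (chain _) lam_1_leN => j ji.
by rewrite addnS; apply: lam_diag_interior; lia.
Qed.

Lemma lam_row_nondec i n : (1 <= i <= d)%N -> (n < N)%N -> lam i n <= lam i n.+1.
Proof.
move=> i_range nN; have [ni|i_le_n] := ltnP n i.
  rewrite [lam i n]lam_eq0 //; last by lia.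
  have [n1i|i_le_n1] := ltnP n.+1 i; first by rewrite lam_eq0.
  have <- : i = n.+1 by lia.
  exact: lam_ii_ge0.
have [interior|boundary] := ltnP (n + d + 1) (N + i); first exact: lam_row_interior.
rewrite [lam i n.+1]lam_eqN //; last by lia.
have [saturated|on_stair] := ltnP (i + N) (n + d + 1).
  by rewrite lam_eqN // ltnW.
by apply: lam_upper_staircase_leN; lia.
Qed.

Lemma lam_diag_le i n : (1 < i <= d)%N -> (0 < n <= N)%N ->
  lam i n <= lam i.-1 n.-1.
Proof.
move=> i_range n_range; have [ni|i_le_n] := ltnP n i.
  by rewrite !lam_eq0 //; lia.
have [interior|boundary] := ltnP (n + d) (N + i); first exact: lam_diag_interior.
by rewrite !lam_eqN //; lia.
Qed.

Lemma lam_col_sum n : (n <= N)%N -> \sum_(1 <= i < d.+1) lam i n = (d * n)%:R.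
Proof.
move=> nN; have [->|n_pos] := posnP n.
  rewrite muln0; apply: big1_seq => i /andP[_]; rewrite mem_index_iota => i_range.
  by apply: lam_eq0; lia.
have [n_lt_N|N_le_n] := ltnP n N; first by apply: lam_sum_interior; rewrite n_pos.
have -> : n = N by lia.
rewrite (eq_big_nat _ _ (F2 := fun _ => N%:R)) => [|i i_range].
  by rewrite sumr_const_nat subn1 natrM mulr_natl.
by apply: lam_eqN; lia.
Qed.

Lemma in_Lambda_of_conditions : in_Lambda N d lam.
Proof.
split.
- by move=> i i_range; apply: lam_eq0; lia.
- by move=> i i_range; apply: lam_eqN; lia.
- exact: lam_col_sum.
- exact: lam_row_nondec.
- exact: lam_diag_le.
Qed.

End EigenstepFromConditions.

Theorem proposition3p1 (R : realFieldType) (N d : nat) (lam : nat -> nat -> R) :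
  (1 <= d)%N -> (d <= N)%N ->
  in_Lambda N d lam <->
  (* C1 *) (forall i n, (1 <= i <= d)%N -> (n <= N)%N -> (n < i)%N -> lam i n = 0) /\
  (* C2 *) (forall i n, (1 <= i <= d)%N -> (n <= N)%N -> (i + N < n + d + 1)%N ->
              lam i n = N%:R) /\
  (* C3 *) (forall n, (0 < n < N)%N -> \sum_(1 <= i < d.+1) lam i n = (d * n)%:R) /\
  (* C4 *) (forall i n, (1 <= i <= d)%N -> (i <= n)%N -> (n + d + 1 < N + i)%N ->
              lam i n <= lam i n.+1) /\
  (* C5 *) (forall i n, (1 < i <= d)%N -> (i <= n)%N -> (n + d < N + i)%N ->
              lam i n <= lam i.-1 n.-1) /\
  (* C6 *) 0 <= lam d d /\
  (* C7 *) lam 1%N (N - d)%N <= N%:R.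
Proof.
move=> d_pos dN; split.
- case=> col0 colN col_sum row_nondec diag.
  split; first exact: eigenstep_eq0 col0 row_nondec diag.
  split; first exact: eigenstep_eqN colN row_nondec diag.
  split; first by move=> n n_range; apply: col_sum; lia.
  split; first by move=> i n i_range *; apply: row_nondec; lia.
  split; first by move=> i n i_range *; apply: diag; lia.
  split; first by apply: (eigenstep_ge0 col0 row_nondec); lia.
  by apply: (eigenstep_leN colN row_nondec); lia.
- case=> C1 [C2 [C3 [C4 [C5 [C6 C7]]]]].
  exact: (@in_Lambda_of_conditions R N d lam dN C1 C2 C3 C4 C5 C6 C7).
Qed.
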